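(* Let $\mathcal{C}$ be a class of finite reflexive digraphs for which there is a natural number $N$ such that every set of disjoint partial pairs in every member of $\mathcal{C}$ has size at most $N$. Then $\mathcal{C}$ is well quasi-ordered under the standard and under the strong homomorphic image orderings.
   Context: A digraph is a set $D$ with a binary relation $E(D)\subseteq D\times D$; it is reflexive if every loop $(x,x)$ is an edge. A pair of vertices $a,b$ is partial if $a\neq b$ and not both $(a,b)$ and $(b,a)$ are edges. Partial pairs $(a_1,b_1),\dots,(a_k,b_k)$ are disjoint if $a_1,\dots,a_k,b_1,\dots,b_k$ are all distinct. A homomorphism maps edges to edges; it is strong if additionally every edge of the target between vertices of the image is the image of an edge. Standard homomorphic image ordering: $A\preceq B$ iff there is a surjective homomorphism $B\to A$; strong: iff there is a surjective strong homomorphism $B\to A$. Well quasi-ordered means no infinite strictly decreasing sequence and no infinite antichain; digraphs considered up to isomorphism. *)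

From mathcomp Require Import all_boot.
Set Implicit Arguments. Unset Strict Implicit. Unset Printing Implicit Defensive.

(* A finite digraph, represented (up to isomorphism) on the vertex set 'I_n. *)
Record digraph := Digraph { dsize : nat; dedge : rel 'I_dsize }.
Arguments dedge : clear implicits.

Definition dvert (G : digraph) := 'I_(dsize G).

Definition reflexive_digraph (G : digraph) : Prop :=
  forall x : dvert G, dedge G x x.

Definition partial_pair (G : digraph) (p : dvert G * dvert G) : bool :=
  (p.1 != p.2) && ~~ (dedge G p.1 p.2 && dedge G p.2 p.1).

Arguments partial_pair : clear implicits.

Definition disjoint_partial_pairs (G : digraph) (s : seq (dvert G * dvert G)) : Prop :=
  all (partial_pair G) s /\ uniq (flatten [seq [:: p.1; p.2] | p <- s]).

Definition hom (G H : digraph) (f : dvert G -> dvert H) : Prop :=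
  forall x y, dedge G x y -> dedge H (f x) (f y).

Arguments hom : clear implicits.

Definition strong_hom (G H : digraph) (f : dvert G -> dvert H) : Prop :=
  hom G H f /\
  forall x y, dedge H (f x) (f y) ->
    exists x' y', [/\ f x' = f x, f y' = f y & dedge G x' y'].

Arguments strong_hom : clear implicits.

Definition surj (G H : digraph) (f : dvert G -> dvert H) : Prop :=
  forall y, exists x, f x = y.

Arguments surj : clear implicits.

Definition hom_image_le (A B : digraph) : Prop :=
  exists f : dvert B -> dvert A, hom B A f /\ surj B A f.

Definition strong_hom_image_le (A B : digraph) : Prop :=
  exists f : dvert B -> dvert A, strong_hom B A f /\ surj B A f.

Definition wqo_on (X : Type) (le : X -> X -> Prop) (P : X -> Prop) : Prop :=
  (~ exists s : nat -> X, (forall i, P (s i)) /\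
        forall i, le (s i.+1) (s i) /\ ~ le (s i) (s i.+1))
  /\
  (~ exists s : nat -> X, (forall i, P (s i)) /\
        forall i j, i <> j -> ~ le (s i) (s j)).

From mathcomp Require Import all_boot zify.
From Stdlib Require Import Classical ClassicalEpsilon.
Set Implicit Arguments. Unset Strict Implicit. Unset Printing Implicit Defensive.

(* The endpoints of a maximal family of disjoint partial pairs of a digraph form a
   list c of at most 2N vertices, and any two distinct vertices outside c are joined
   in both directions.  Coding each vertex by its position in c, or else by its in-
   and out-adjacency to c, the adjacency of two vertices becomes a function of their
   codes and of the digraph induced on c (reflexivity takes care of equal vertices).
   Hence G is a strong homomorphic image of H as soon as both induce the same digraph
   on their cores, realise the same codes, and no code has more vertices in G than
   in H: map each code class of H onto the corresponding class of G.  These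
   conditions compare finitely many finite data and finitely many multiplicities, so
   pigeonhole and Dickson's lemma extract from every infinite sequence in C such a
   pair G_i, G_j with i < j. *)

Definition chainable (X : Type) (r : X -> X -> Prop) : Prop :=
  forall s : nat -> X, exists2 q : nat -> nat,
    {homo q : i j / i < j} & forall i j, i < j -> r (s (q i)) (s (q j)).

Lemma ex_argmin_from (g : nat -> nat) k :
  exists a, k <= a /\ forall m, k <= m -> g a <= g m.
Proof.
suff: forall v m, k <= m -> g m = v -> exists a, k <= a /\ forall m, k <= m -> g a <= g m.
  by move=> /(_ _ k (leqnn k) erefl).
elim/ltn_ind=> v IH m km gm_v.
case: (classic (exists2 m', k <= m' & g m' < g m)) => [[m' km' lt_m'm] | no_lt].
  by apply: (IH (g m')) km' erefl; rewrite -gm_v.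
exists m; split=> // m' km'; rewrite leqNgt; apply/negP => lt_m'm.
by apply: no_lt; exists m'.
Qed.

Lemma sub_chainable (X : Type) (r1 r2 : X -> X -> Prop) :
  (forall x y, r1 x y -> r2 x y) -> chainable r1 -> chainable r2.
Proof.
by move=> r12 ch s; have [q q_incr rq] := ch s; exists q => // i j /rq/r12.
Qed.

Lemma chainable_leq : chainable leq.
Proof.
move=> s; have [next nextP] := choice _ (ex_argmin_from s).
pose q i := iter i (fun a => next a.+1) (next 0).
have q_min i m : q i <= m -> s (q i) <= s m.
  case: i => [|i] le_qm; apply: (proj2 (nextP _)) => //.
  exact: leq_trans (proj1 (nextP _)) le_qm.
have q_incr : {homo q : i j / i < j}.
  by apply: (homo_ltn ltn_trans) => i; exact: (proj1 (nextP _)).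
by exists q => // i j /q_incr/ltnW; apply: q_min.
Qed.

Lemma chainable_preim (X Y : Type) (f : X -> Y) (r : Y -> Y -> Prop) :
  chainable r -> chainable (fun x y => r (f x) (f y)).
Proof. by move=> r_ch s; apply: r_ch (f \o s). Qed.

Lemma chainable_and (X : Type) (r1 r2 : X -> X -> Prop) :
  chainable r1 -> chainable r2 -> chainable (fun x y => r1 x y /\ r2 x y).
Proof.
move=> ch1 ch2 s; have [q1 q1_incr r1q1] := ch1 s.
have [q2 q2_incr r2q2] := ch2 (s \o q1).
exists (q1 \o q2) => [i j /q2_incr/q1_incr // | i j lt_ij].
by split; [apply/r1q1/q2_incr | apply: r2q2].
Qed.

Lemma chainable_forall (T : finType) (X : Type) (r : T -> X -> X -> Prop) :
  (forall t, chainable (r t)) -> chainable (fun x y => forall t, r t x y).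
Proof.
move=> r_ch; suff: chainable (fun x y => forall t, t \in enum T -> r t x y).
  by apply: sub_chainable => x y rxy t; apply/rxy/mem_enum.
elim: (enum T) => [s | t ts IH].
  by exists id => // i j _ t; rewrite in_nil.
apply: sub_chainable (chainable_and (r_ch t) IH) => x y [rt rts] t'.
by rewrite in_cons => /predU1P[-> | /rts].
Qed.

Lemma chainable_eq (A : finType) : chainable (@eq A).
Proof.
pose rk (x : A) : nat := enum_rank x.
have rk_le x : rk x <= #|A| by exact/ltnW/ltn_ord.
apply: sub_chainable (chainable_and (chainable_preim rk chainable_leq)
                        (chainable_preim (fun x => #|A| - rk x) chainable_leq)).
move=> x y [le_xy]; rewrite leq_sub2lE // => le_yx.
by apply/enum_rank_inj/val_inj/eqP; rewrite eqn_leq le_xy.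
Qed.

Lemma wqo_on_of_good (X : Type) (le : X -> X -> Prop) (P : X -> Prop) :
  (forall x y z, le x y -> le y z -> le x z) ->
  (forall s, (forall i, P (s i)) -> exists i j, i < j /\ le (s i) (s j)) ->
  wqo_on le P.
Proof.
move=> le_trans good; split=> [[s [Ps s_desc]] | [s [Ps s_anti]]];
  have [i [j [lt_ij le_ij]]] := good s Ps.
- have s_anti : {homo s : k l / k < l >-> le l k}.
    apply: homo_ltn => [y x z le_yx le_zy | k]; first exact: le_trans le_zy le_yx.
    exact: (s_desc k).1.
  apply: (s_desc i).2; move: lt_ij le_ij; rewrite leq_eqVlt.
  by case/predU1P=> [<- // | /s_anti le_ji le_ij]; apply: le_trans le_ij le_ji.
- by apply: s_anti le_ij => eq_ij; rewrite eq_ij ltnn in lt_ij.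
Qed.

Lemma surj_comp (G H K : digraph) f g :
  surj H K f -> surj G H g -> surj G K (f \o g).
Proof.
by move=> f_surj g_surj z; have [y <-] := f_surj z; have [x <-] := g_surj y; exists x.
Qed.

Lemma hom_image_le_trans (A B D : digraph) :
  hom_image_le A B -> hom_image_le B D -> hom_image_le A D.
Proof.
move=> [f [f_hom f_surj]] [g [g_hom g_surj]]; exists (f \o g); split.
  by move=> x y /g_hom/f_hom.
exact: surj_comp.
Qed.

Lemma strong_hom_image_le_trans (A B D : digraph) :
  strong_hom_image_le A B -> strong_hom_image_le B D -> strong_hom_image_le A D.
Proof.
move=> [f [[f_hom f_refl] f_surj]] [g [[g_hom g_refl] g_surj]].
exists (f \o g); split; last exact: surj_comp.
split=> [x y /g_hom/f_hom // | x y /f_refl[x1 [y1 [fx1 fy1]]]].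
have [x2 gx2] := g_surj x1; have [y2 gy2] := g_surj y1.
rewrite -gx2 -gy2 => /g_refl[x3 [y3 [gx3 gy3 e3]]]; exists x3, y3.
by rewrite /= gx3 gy3 gx2 gy2 fx1 fy1.
Qed.

Lemma strong_hom_image_leW (A B : digraph) :
  strong_hom_image_le A B -> hom_image_le A B.
Proof. by move=> [f [[f_hom _] f_surj]]; exists f. Qed.

Lemma bounded_ex_maximal (T : Type) (P : seq T -> Prop) N :
  P [::] -> (forall s, P s -> size s <= N) ->
  exists s, P s /\ forall x, ~ P (x :: s).
Proof.
move=> P0 bounded.
suff: forall k s, P s -> N - size s <= k -> exists s, P s /\ forall x, ~ P (x :: s).
  by move=> /(_ N [::] P0); apply; rewrite subn0.
elim=> [|k IH] s Ps le_k;
  (case: (classic (exists x, P (x :: s))) => [[x Pxs] | no_ext];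
   last by exists s; split=> // x Pxs; apply: no_ext; exists x).
- by have /= := bounded _ Pxs; lia.
- by apply: IH Pxs _ => /=; lia.
Qed.

Definition endpoints (T : Type) (s : seq (T * T)) : seq T :=
  flatten [seq [:: p.1; p.2] | p <- s].

Lemma size_endpoints (T : Type) (s : seq (T * T)) :
  size (endpoints s) = 2 * size s.
Proof. by elim: s => //= p s IH; rewrite IH; lia. Qed.

Definition complete_outside (G : digraph) (c : seq (dvert G)) : Prop :=
  forall x y, x \notin c -> y \notin c -> x != y -> dedge G x y.

Definition is_core (n : nat) (G : digraph) (c : seq (dvert G)) : Prop :=
  size c <= n /\ complete_outside c.

Lemma complete_outside_endpoints (G : digraph) (s : seq (dvert G * dvert G)) :
  disjoint_partial_pairs s -> (forall p, ~ disjoint_partial_pairs (p :: s)) ->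
  complete_outside (endpoints s).
Proof.
rewrite /endpoints => -[s_partial s_uniq] s_max x y xs ys neq_xy.
apply: contraT => no_xy; case: (s_max (x, y)); split.
  by rewrite /= s_partial andbT /partial_pair /= neq_xy (negbTE no_xy).
by rewrite /= in_cons negb_or neq_xy xs ys s_uniq.
Qed.

Lemma exists_core (G : digraph) N :
  (forall s : seq (dvert G * dvert G), disjoint_partial_pairs s -> size s <= N) ->
  exists c : seq (dvert G), is_core (2 * N) c.
Proof.
move=> bounded.
have [s [s_dpp s_max]] := bounded_ex_maximal (conj isT isT) bounded.
exists (endpoints s); split; last exact: complete_outside_endpoints.
by rewrite size_endpoints leq_mul2l bounded ?orbT.
Qed.

Lemma fiberwise_surjection (A B : finType) (L : eqType) (cA : A -> L) (cB : B -> L) :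
  (forall b, exists a, cA a = cB b) ->
  (forall l, #|[pred a | cA a == l]| <= #|[pred b | cB b == l]|) ->
  exists f : B -> A, (forall b, cA (f b) = cB b) /\ (forall a, exists b, f b = a).
Proof.
move=> covered fiber_le; case: (pickP A) => [a0 _ | A_empty]; last first.
  have noB (b : B) : False by have [a _] := covered b; have := A_empty a.
  exists (fun b => match noB b with end).
  by split=> [b | a]; [case: (noB b) | have := A_empty a].
pose fibA l := enum [pred a | cA a == l]; pose fibB l := enum [pred b | cB b == l].
pose f b := nth a0 (fibA (cB b)) (index b (fibB (cB b)) %% size (fibA (cB b))).
exists f; split=> [b | a].
  have [a ca] := covered b.
  have : f b \in fibA (cB b).
    by rewrite mem_nth // ltn_pmod // -cardE; apply/card_gt0P; exists a; rewrite inE ca.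
  by rewrite mem_enum inE => /eqP.
have a_in : a \in fibA (cA a) by rewrite mem_enum inE.
have lt_aB : index a (fibA (cA a)) < size (fibB (cA a)).
  by rewrite /fibB -cardE; apply: leq_trans (fiber_le (cA a)); rewrite cardE index_mem.
have [b0 _] : exists b0 : B, true.
  by case: (fibB (cA a)) lt_aB => // b0 _ _; exists b0.
pose b := nth b0 (fibB (cA a)) (index a (fibA (cA a))).
have cb : cB b = cA a by have := mem_nth b0 lt_aB; rewrite mem_enum inE => /eqP.
exists b; rewrite /f cb index_uniq ?enum_uniq // modn_small ?index_mem //.
exact: nth_index.
Qed.

Section Codes.

Variable n : nat.

(* A core vertex is coded by the position of its first occurrence in the core c, any
   other vertex by its adjacency rows to c; positions at or beyond [size c] read [false]. *)
Definition code_type : finType := ('I_n.+1 + {ffun 'I_n.+1 -> bool * bool})%type.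

Definition code_edge (g : {ffun 'I_n.+1 * 'I_n.+1 -> bool}) (a b : code_type) : bool :=
  match a, b with
  | inl i, inl j => g (i, j)
  | inl i, inr t => (t i).1
  | inr t, inl j => (t j).2
  | inr _, inr _ => true
  end.

Section OneDigraph.

Variables (G : digraph) (c : seq (dvert G)).

Definition core_digraph : {ffun 'I_n.+1 * 'I_n.+1 -> bool} :=
  [ffun ij : 'I_n.+1 * 'I_n.+1 =>
     nth false [seq nth false [seq dedge G u w | w <- c] ij.2 | u <- c] ij.1].

Definition core_adjacency (v : dvert G) : {ffun 'I_n.+1 -> bool * bool} :=
  [ffun i : 'I_n.+1 =>
     (nth false [seq dedge G u v | u <- c] i, nth false [seq dedge G v u | u <- c] i)].

Definition code (v : dvert G) : code_type :=
  if v \in c then inl (inord (index v c)) else inr (core_adjacency v).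

Definition profile : {ffun code_type -> nat} := [ffun a => #|[pred v | code v == a]|].

Hypotheses (G_refl : reflexive_digraph G) (c_core : is_core n c).

Lemma nth_map_inord_index (F : dvert G -> bool) x :
  x \in c -> nth false (map F c) (inord (index x c) : 'I_n.+1) = F x.
Proof.
move=> xc; have lt_xc : index x c < size c by rewrite index_mem.
have lt_xn : index x c < n.+1 := leq_trans lt_xc (leqW (proj1 c_core)).
by rewrite inordK // (nth_map x) // nth_index.
Qed.

Lemma dedge_code x y : dedge G x y = code_edge core_digraph (code x) (code y).
Proof.
rewrite /code; case: ifPn => xc; case: ifPn => yc /=.
all: try by rewrite ffunE /= !nth_map_inord_index.
have [-> | neq_xy] := eqVneq x y; [exact: G_refl | exact: (proj2 c_core)].
Qed.

End OneDigraph.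

Lemma strong_hom_image_le_of_profile (G H : digraph)
    (cG : seq (dvert G)) (cH : seq (dvert H)) :
  reflexive_digraph G -> reflexive_digraph H -> is_core n cG -> is_core n cH ->
  core_digraph cG = core_digraph cH ->
  (forall a, 0 < profile cH a -> 0 < profile cG a) ->
  (forall a, profile cG a <= profile cH a) ->
  strong_hom_image_le G H.
Proof.
move=> G_refl H_refl cG_core cH_core same_core supp_le prof_le.
have covered v : exists w, code cG w = code cH v.
  have /supp_le : 0 < profile cH (code cH v).
    by rewrite ffunE; apply/card_gt0P; exists v; rewrite inE.
  by rewrite ffunE => /card_gt0P[w]; rewrite inE => /eqP; exists w.
have fiber_le a : #|[pred w | code cG w == a]| <= #|[pred v | code cH v == a]|.
  by have := prof_le a; rewrite !ffunE.
have [f [f_code f_surj]] := fiberwise_surjection covered fiber_le.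
have f_edge x y : dedge G (f x) (f y) = dedge H x y.
  by rewrite (dedge_code G_refl cG_core) (dedge_code H_refl cH_core) !f_code same_core.
exists f; split=> //; split=> [x y | x y e]; first by rewrite f_edge.
by exists x, y; rewrite -f_edge.
Qed.

Lemma good_strong_hom_image_le (s : nat -> digraph) :
  (forall i, reflexive_digraph (s i)) ->
  (forall i, exists c : seq (dvert (s i)), is_core n c) ->
  exists i j, i < j /\ strong_hom_image_le (s i) (s j).
Proof.
move=> s_refl s_core.
pose c i := proj1_sig (constructive_indefinite_description _ (s_core i)).
have c_core i : is_core n (c i).
  exact: proj2_sig (constructive_indefinite_description _ (s_core i)).
pose key i := (core_digraph (c i), [ffun a => 0 < profile (c i) a]).
have key_chain :
    chainable (fun i j => key i = key j /\ forall a, profile (c i) a <= profile (c j) a).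
  apply: chainable_and; first exact: chainable_preim (@chainable_eq _).
  by apply: chainable_forall => a; apply: chainable_preim chainable_leq.
have [q q_incr q_chain] := key_chain id.
have [[same_core same_supp] prof_le] := q_chain 0 1 isT.
exists (q 0), (q 1); split; first exact: q_incr.
apply: strong_hom_image_le_of_profile (c_core _) (c_core _) same_core _ prof_le => //.
by move=> a; move/ffunP/(_ a): same_supp; rewrite !ffunE => ->.
Qed.

End Codes.

Theorem lemma4p5 (C : digraph -> Prop) :
  (forall G, C G -> reflexive_digraph G) ->
  (exists N : nat, forall G, C G -> forall s : seq (dvert G * dvert G),
      disjoint_partial_pairs s -> size s <= N) ->
  wqo_on hom_image_le C /\ wqo_on strong_hom_image_le C.
Proof.
move=> C_refl [N C_bounded].
have C_good s : (forall i, C (s i)) -> exists i j, i < j /\ strong_hom_image_le (s i) (s j).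
  move=> Cs; apply: (@good_strong_hom_image_le (2 * N)) => i.
    exact: C_refl.
  exact: exists_core (C_bounded _ (Cs i)).
split; apply: wqo_on_of_good.
- exact: hom_image_le_trans.
- by move=> s /C_good[i [j [lt_ij /strong_hom_image_leW le_ij]]]; exists i, j.
- exact: strong_hom_image_le_trans.
- exact: C_good.
Qed.
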